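(* Let $X$ and $Y$ be unit Fréchet random variables (distribution function $e^{-1/x}$, $x>0$) such that $\lambda:=\lim_{u\to\infty}\mathbb{P}(X>u\mid Y>u)=0$, and let $(X_i,Y_i)$, $i\ge1$, be i.i.d. copies of $(X,Y)$. Then, as $n\to\infty$, $q_n\to0$ almost surely and, for any fixed threshold $u>0$, $q_{u,n}\to0$ almost surely, where $$q_n=\frac{\max_{i\le n}\{Y_i/X_i\}+\max_{i\le n}\{X_i/Y_i\}-2}{\max_{i\le n}\{Y_i/X_i\}\max_{i\le n}\{X_i/Y_i\}-1},\qquad q_{u,n}=\frac{\max_{i\le n}\{(u+W_i)/(u+V_i)\}+\max_{i\le n}\{(u+V_i)/(u+W_i)\}-2}{\max_{i\le n}\{(u+W_i)/(u+V_i)\}\max_{i\le n}\{(u+V_i)/(u+W_i)\}-1},$$ with $W_i=(X_i-u)I_{\{X_i>u\}}$ and $V_i=(Y_i-u)I_{\{Y_i>u\}}$.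
   Context: The quantity $\lambda$ is the tail dependence index of $(X,Y)$; $X$ and $Y$ are called tail independent if $\lambda=0$. $q_n$ is the quotient correlation and $q_{u,n}$ the tail quotient correlation at threshold $u$; $W_i,V_i$ are the exceedances over $u$. *)

From HB Require Import structures.
From mathcomp Require Import all_boot all_order all_algebra.
From mathcomp Require Import all_classical all_reals all_analysis.
Set Implicit Arguments. Unset Strict Implicit. Unset Printing Implicit Defensive.
Import Order.TTheory GRing.Theory Num.Theory.
Import numFieldNormedType.Exports.
Local Open Scope classical_set_scope.
Local Open Scope ring_scope.

Section defs.
Context (R : realType).

Definition quot_corr (a b : R) : R := (a + b - 2) / (a * b - 1).

Definition qcorr {T : Type} (X Y : nat -> T -> R) (n : nat) (t : T) : R :=
  quot_corr (\big[Num.max/0]_(i < n) (Y i t / X i t))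
            (\big[Num.max/0]_(i < n) (X i t / Y i t)).

Definition exceed {T : Type} (u : R) (Z : T -> R) (t : T) : R :=
  if u < Z t then Z t - u else 0.

Definition tail_qcorr {T : Type} (u : R) (X Y : nat -> T -> R) (n : nat)
  (t : T) : R :=
  quot_corr
    (\big[Num.max/0]_(i < n) ((u + exceed u (X i) t) / (u + exceed u (Y i) t)))
    (\big[Num.max/0]_(i < n) ((u + exceed u (Y i) t) / (u + exceed u (X i) t))).
End defs.

Section prob.
Context {d : measure_display} {T : measurableType d} {R : realType}.
Local Open Scope ereal_scope.

Definition unit_frechet (P : probability T R) (Z : T -> R) : Prop :=
  measurable_fun setT Z /\
  forall x : R, P [set t | Z t <= x]%R =
    (if (0 < x)%R then expR (- x^-1) else 0%R)%:E.

Definition mutually_independent (P : probability T R) (Z : nat -> T -> R * R)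
  : Prop :=
  forall (s : seq nat) (A : nat -> set (R * R)),
    uniq s -> (forall i, measurable (A i)) ->
    P (\bigcap_(i in [set` s]) (Z i @^-1` A i)) =
    \big[*%E/1%E]_(i <- s) P (Z i @^-1` A i).

Definition identically_distributed (P : probability T R)
  (Z : nat -> T -> R * R) (W : T -> R * R) : Prop :=
  forall i (A : set (R * R)), measurable A -> P (Z i @^-1` A) = P (W @^-1` A).
End prob.

From HB Require Import structures.
From mathcomp Require Import all_boot all_order all_algebra.
From mathcomp Require Import all_classical all_reals all_analysis.
From mathcomp Require Import lra.
Import Order.TTheory GRing.Theory Num.Theory.
Import numFieldNormedType.Exports.
Local Open Scope classical_set_scope.
Local Open Scope ring_scope.
Set Implicit Arguments. Unset Strict Implicit.

(* Both quotient correlations are [(a + b - 2) / (a b - 1)], which tends to 0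
   as soon as both maxima [a] and [b] tend to infinity. For every [M], tail
   independence makes the event [{0 < X, M u < Y, M X < Y}] non-null: otherwise
   [P(Y > M v) <= P(X > v, Y > v)] for large [v], and the Frechet tails give
   [P(X > v | Y > v) >= 1/(M + 1)]. Among i.i.d. copies a non-null event occurs
   almost surely, so both ratio maxima exceed every [M] almost surely; the
   second maximum follows by exchanging the roles of [X] and [Y]. *)

Section quotient_correlation.
Context (R : realType).

Lemma quot_corr_le (a b K : R) : 2 <= K -> K <= a -> K <= b ->
  `|quot_corr a b| <= 4 / K.
Proof.
move=> K2 Ka Kb; rewrite /quot_corr.
have KK_le_ab : K * K <= a * b by apply: ler_pM; lra.
have den_gt0 : 0 < a * b - 1 by nra.
rewrite ger0_norm; last by apply: divr_ge0; lra.
rewrite ler_pdivrMr // mulrC mulrA ler_pdivlMr; last lra.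
have Ka_le_ab : K * a <= a * b by rewrite mulrC; apply: ler_wpM2l; lra.
have Kb_le_ab : K * b <= a * b by apply: ler_wpM2r; lra.
nra.
Qed.

Lemma quot_corr_cvg0 (a b : nat -> R) :
  a @ \oo --> +oo -> b @ \oo --> +oo ->
  quot_corr (a n) (b n) @[n --> \oo] --> 0.
Proof.
move=> /cvgryPge a_oo /cvgryPge b_oo; apply/cvgrPdist_lt => e e0.
have K2 : 2 <= 2 + 4 / e by rewrite lerDl divr_ge0 // ltW.
apply: filterS2 (a_oo (2 + 4 / e)) (b_oo (2 + 4 / e)) => n Ka Kb.
rewrite sub0r normrN; apply: le_lt_trans (quot_corr_le K2 Ka Kb) _.
have e4 : e * (4 / e) = 4 by rewrite mulrC divfK ?gt_eqF.
rewrite ltr_pdivrMr; last lra.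
nra.
Qed.

Lemma bigmax_cvgy (f : nat -> R) : (forall N : nat, exists i, N%:R < f i) ->
  \big[Num.max/0]_(i < n) f i @[n --> \oo] --> +oo.
Proof.
move=> f_unbounded; apply/cvgryPgt => A.
have [i Ai] := f_unbounded (Num.truncn A).+1.
near=> n.
have i_lt_n : (i < n)%N by near: n; exists i.+1.
apply: lt_trans (truncnS_gt A) (lt_le_trans Ai _).
exact: (le_bigmax 0 (fun j : 'I_n => f j) (Ordinal i_lt_n)).
Unshelve. all: by end_near.
Qed.

End quotient_correlation.

Section measurable_comparison.
Context d (T : measurableType d) (R : realType).

Lemma measurable_ltr (f g : T -> R) :
  measurable_fun setT f -> measurable_fun setT g -> measurable [set t | f t < g t].
Proof.
move=> mf mg; rewrite -[X in measurable X]setTI.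
exact: (measurable_realfun.measurable_fun_ltr mf mg measurableT
  (I : measurable [set true])).
Qed.

Lemma measurable_ler (f g : T -> R) :
  measurable_fun setT f -> measurable_fun setT g -> measurable [set t | f t <= g t].
Proof.
move=> mf mg; rewrite -[X in measurable X]setTI.
exact: (measurable_realfun.measurable_fun_ler mf mg measurableT
  (I : measurable [set true])).
Qed.

End measurable_comparison.

Section iid.
Context d (T : measurableType d) (R : realType) (P : probability T R).

Lemma mutually_independent_comp (Z : nat -> T -> R * R) (f : R * R -> R * R) :
  measurable_fun setT f -> mutually_independent P Z ->
  mutually_independent P (fun i t => f (Z i t)).
Proof.
move=> mf indep s A uniq_s mA.
have mfA i : measurable (f @^-1` A i) by rewrite -[f @^-1` _]setTI; exact: mf.
exact: (indep s _ uniq_s mfA).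
Qed.

Lemma identically_distributed_comp (Z : nat -> T -> R * R) (W : T -> R * R)
    (f : R * R -> R * R) :
  measurable_fun setT f -> identically_distributed P Z W ->
  identically_distributed P (fun i t => f (Z i t)) (fun t => f (W t)).
Proof.
move=> mf idd i A mA.
have mfA : measurable (f @^-1` A) by rewrite -[f @^-1` _]setTI; exact: mf.
exact: (idd i _ mfA).
Qed.

Lemma ae_exists_hit (Z : nat -> T -> R * R) (W : T -> R * R) (A : set (R * R)) :
  (forall i, measurable_fun setT (Z i)) -> mutually_independent P Z ->
  identically_distributed P Z W -> measurable A -> P (W @^-1` A) != 0%E ->
  {ae P, forall t, exists i, A (Z i t)}.
Proof.
move=> mZ indep idd mA PA_neq0.
have mZ_pre i (B : set (R * R)) : measurable B -> measurable (Z i @^-1` B).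
  by move=> mB; rewrite -[_ @^-1` _]setTI; exact: mZ.
set q := fine (P (W @^-1` A)).
have PZA i : P (Z i @^-1` A) = q%:E.
  by rewrite /q -(idd i A mA) fineK // fin_num_measure //; exact: mZ_pre.
have q_gt0 : 0 < q.
  rewrite lt_neqAle eq_sym -lee_fin -[q%:E](PZA 0%N) measure_ge0 andbT.
  by apply: contra PA_neq0 => /eqP q0; rewrite -(idd 0%N A mA) PZA q0.
have q_le1 : q <= 1.
  by rewrite -lee_fin -[q%:E](PZA 0%N) probability_le1 //; exact: mZ_pre.
have PZC i : P (Z i @^-1` ~` A) = (1 - q)%:E.
  rewrite preimage_setC probability_setC; last exact: mZ_pre.
  by rewrite PZA EFinB.
set N := \bigcap_i Z i @^-1` ~` A.
have mN : measurable N.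
  by apply: bigcap_measurableType => i _; apply: mZ_pre; exact: measurableC.
(* [N] lies inside the event that none of the first [n] copies hits [A]. *)
have PN_le n : fine (P N) <= (1 - q) ^+ n.
  rewrite -lee_fin fineK ?fin_num_measure //.
  apply: (@le_trans _ _ (P (\bigcap_(i in [set` index_iota 0 n]) Z i @^-1` ~` A))).
    apply: le_measure; rewrite ?inE //; last by move=> t Nt i _; exact: Nt.
    by apply: bigcap_measurableType => i _; apply: mZ_pre; exact: measurableC.
  rewrite (indep _ (fun=> ~` A)) ?iota_uniq //; last by move=> _; exact: measurableC.
  by rewrite (eq_bigr _ (fun i _ => PZC i)) prodEFin prodr_const_nat subn0.
exists N; split => //.
- apply/eqP; rewrite eq_le measure_ge0 andbT -(fineK (fin_num_measure P N mN)).
  rewrite lee_fin; apply: (cvgr_to_ge (cvg_expr _)); last exact: nearW.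
  by rewrite ger0_norm; lra.
- by move=> t /= not_hit i _ Ai; apply: not_hit; exists i.
Qed.

End iid.

Section ratio_event.
Context (R : realType).

Definition ratio_event (u M : R) : set (R * R) :=
  [set p | 0 < p.1] `&` [set p | M * u < p.2] `&` [set p | M * p.1 < p.2].

Lemma measurable_ratio_event (u M : R) : measurable (ratio_event u M).
Proof.
have mfst : measurable_fun [set: R * R] fst := measurable_fst.
have msnd : measurable_fun [set: R * R] snd := measurable_snd.
apply: measurableI; first by apply: measurableI; exact: measurable_ltr.
apply: measurable_ltr => //.
exact: measurable_realfun.measurable_funM.
Qed.

Lemma ratio_event_div_gt (u M x y : R) : ratio_event u M (x, y) -> M < y / x.
Proof. by move=> [[/= x_gt0 _] /= Mx_lt_y]; rewrite ltr_pdivlMr. Qed.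

Lemma ratio_event_exceed_gt (T : Type) (u M : R) (X Y : T -> R) (t : T) :
  0 < u -> 1 <= M -> ratio_event u M (X t, Y t) ->
  M < (u + exceed u Y t) / (u + exceed u X t).
Proof.
move=> u_gt0 M1 [[/= X_gt0 Mu_lt_Y] /= MX_lt_Y].
have u_lt_Y : u < Y t by nra.
rewrite /exceed u_lt_Y addrC subrK.
case: ifP => _; last by rewrite addr0 ltr_pdivlMr.
by rewrite addrC subrK ltr_pdivlMr.
Qed.

End ratio_event.

Section tail_independence.
Context d (T : measurableType d) (R : realType) (P : probability T R).

(* [1 - expR (- x^-1)] is the unit Frechet tail [P(Z > x)], so this bounds
   [P(Z > M v) / P(Z > v)] from below uniformly in [v >= 1]. *)
Lemma frechet_tail_ratio_ge (M v : R) : 1 <= M -> 1 <= v ->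
  (M + 1)^-1 <= (1 - expR (- (M * v)^-1)) / (1 - expR (- v^-1)).
Proof.
move=> M1 v1; set t := v^-1; set s := (M * v)^-1.
have t_gt0 : 0 < t by rewrite invr_gt0; lra.
have t_le1 : t <= 1 by rewrite invf_le1; lra.
have t_Ms : t = M * s by rewrite /s invfM mulrA divff ?mul1r //; lra.
have s_gt0 : 0 < s by rewrite invr_gt0 mulr_gt0 //; lra.
have den_gt0 : 0 < 1 - expR (- t) by rewrite subr_gt0 expR_lt1 oppr_lt0.
rewrite ler_pdivlMr // mulrC ler_pdivrMr; last lra.
have expt_ge := expR_ge1Dx (- t).
have exps_le : (1 + s) * expR (- s) <= 1.
  by rewrite expRN ler_pdivrMr ?expR_gt0 // mul1r; exact: expR_ge1Dx.
have := expR_gt0 (- s).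
nra.
Qed.

Definition tail_independent (X Y : T -> R) : Prop :=
  (fun u : R => fine (P ([set t | u < X t] `&` [set t | u < Y t])) /
                fine (P [set t | u < Y t])) @ +oo --> (0 : R).

Lemma unit_frechet_gt (Z : T -> R) (x : R) : unit_frechet P Z -> 0 < x ->
  P [set t | x < Z t] = (1 - expR (- x^-1))%:E.
Proof.
move=> [mZ Z_cdf] x_gt0.
have -> : [set t | x < Z t] = ~` [set t | Z t <= x].
  by apply/seteqP; split => t /=; rewrite ltNge => /negP.
rewrite probability_setC; last by apply: measurable_ler => //; exact: measurable_cst.
by rewrite Z_cdf x_gt0 EFinB.
Qed.

Lemma unit_frechet_le0 (Z : T -> R) : unit_frechet P Z -> P [set t | Z t <= 0] = 0%E.
Proof. by case=> _ ->; rewrite ltxx. Qed.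

Lemma tail_independentC (X Y : T -> R) :
  unit_frechet P X -> unit_frechet P Y -> tail_independent X Y -> tail_independent Y X.
Proof.
move=> fX fY; apply: cvg_trans; apply: near_eq_cvg; near=> u.
have u_gt0 : 0 < u by near: u; apply: nbhs_pinfty_gt.
by rewrite setIC (unit_frechet_gt fX) // (unit_frechet_gt fY).
Unshelve. all: by end_near.
Qed.

Lemma tail_cover_neq0 (X Y : T -> R) (S : set T) (M v0 : R) :
  unit_frechet P X -> unit_frechet P Y -> tail_independent X Y ->
  1 <= M -> measurable S ->
  (forall v, v0 < v ->
     [set t | M * v < Y t] `<=` [set t | v < X t] `&` [set t | v < Y t] `|` S) ->
  P S != 0%E.
Proof.
move=> fX fY XY_indep M1 mS cover; apply/negP => /eqP PS0.
suff : (M + 1)^-1 <= 0 by rewrite leNgt invr_gt0; lra.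
apply: (cvgr_to_ge XY_indep); near=> v.
have v_gt : Num.max v0 1 < v by near: v; apply: nbhs_pinfty_gt; exact: num_real.
move: v_gt; rewrite gt_max => /andP[v0_lt v_gt1].
set I := [set t | v < X t] `&` [set t | v < Y t].
have mI : measurable I.
  by apply: measurableI; apply: measurable_ltr => //; [exact: fX.1 | exact: fY.1].
have PY_le_PI : (P [set t | (M * v < Y t)%R] <= P I)%E.
  rewrite -(measureU0 mI mS PS0); apply: le_measure; rewrite ?inE //.
  - by apply: measurable_ltr => //; exact: fY.1.
  - exact: measurableU.
  - exact: cover.
rewrite (unit_frechet_gt fY) in PY_le_PI; last by apply: mulr_gt0; lra.
rewrite (unit_frechet_gt fY) /=; last lra.
apply: le_trans (frechet_tail_ratio_ge M1 (ltW v_gt1)) _.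
apply: ler_wpM2r; first by rewrite invr_ge0 subr_ge0 expR_le1 oppr_le0 invr_ge0; lra.
by rewrite -lee_fin fineK // fin_num_measure.
Unshelve. all: by end_near.
Qed.

Lemma ratio_event_neq0 (X Y : T -> R) (u M : R) :
  unit_frechet P X -> unit_frechet P Y -> tail_independent X Y ->
  0 < u -> 1 <= M -> P ((fun t => (X t, Y t)) @^-1` ratio_event u M) != 0%E.
Proof.
move=> fX fY XY_indep u_gt0 M1.
set E := _ @^-1` _.
have mE : measurable E.
  rewrite -[E]setTI.
  apply: (measurable_fun_pair fX.1 fY.1) => //.
  exact: measurable_ratio_event.
have mX_le0 : measurable [set t | X t <= 0].
  by apply: measurable_ler => //; exact: fX.1.
(* When [0 < X <= v], [Y > M v] forces [Y > M X]: the joint exceedance, the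
   event and [X <= 0] cover [Y > M v]. *)
rewrite -(measureU0 mE mX_le0 (unit_frechet_le0 fX)).
apply: (tail_cover_neq0 (v0 := u) fX fY XY_indep M1); first exact: measurableU.
move=> v u_lt_v t /= Y_gt.
have [v_lt_X|X_le_v] := ltP v (X t); first by left; split => //; nra.
right; have [X_gt0|] := ltP 0 (X t); last by right.
by left; split; [split|] => //=; nra.
Qed.

End tail_independence.

Section iid_ratio_maxima.
Context d (T : measurableType d) (R : realType) (P : probability T R).
Variables (X Y : T -> R) (Xs Ys : nat -> T -> R).
Hypotheses (fX : unit_frechet P X) (fY : unit_frechet P Y)
  (XY_indep : tail_independent P X Y)
  (mXs : forall i, measurable_fun setT (Xs i))
  (mYs : forall i, measurable_fun setT (Ys i))
  (indep : mutually_independent P (fun i t => (Xs i t, Ys i t)))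
  (idd : identically_distributed P (fun i t => (Xs i t, Ys i t)) (fun t => (X t, Y t))).

Lemma ae_exists_ratio_events (u : R) : 0 < u ->
  {ae P, forall t (N : nat), exists i, ratio_event u N.+1%:R (Xs i t, Ys i t)}.
Proof.
move=> u_gt0; apply: ae_foralln => N.
apply: (ae_exists_hit _ indep idd).
- by move=> i; exact: measurable_fun_pair.
- exact: measurable_ratio_event.
- by apply: ratio_event_neq0; rewrite // ler1n.
Qed.

Lemma ae_bigmax_ratio_cvgy :
  {ae P, forall t, \big[Num.max/0]_(i < n) (Ys i t / Xs i t) @[n --> \oo] --> +oo}.
Proof.
have := ae_exists_ratio_events (@ltr01 R).
apply: filterS => t hits.
apply: (bigmax_cvgy (f := fun i => Ys i t / Xs i t)) => N.
have [i E_i] := hits N; exists i.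
by apply: lt_trans (ratio_event_div_gt E_i); rewrite ltr_nat.
Qed.

Lemma ae_bigmax_tail_ratio_cvgy (u : R) : 0 < u ->
  {ae P, forall t, \big[Num.max/0]_(i < n)
     ((u + exceed u (Ys i) t) / (u + exceed u (Xs i) t)) @[n --> \oo] --> +oo}.
Proof.
move=> u_gt0; apply: filterS (ae_exists_ratio_events u_gt0) => t hits.
apply: (bigmax_cvgy (f := fun i => (u + exceed u (Ys i) t) / (u + exceed u (Xs i) t))).
move=> N; have [i E_i] := hits N; exists i.
by apply: lt_trans (ratio_event_exceed_gt u_gt0 _ E_i); rewrite ?ltr_nat ?ler1n.
Qed.

End iid_ratio_maxima.

Theorem theorem5p1 (d : measure_display) (T : measurableType d) (R : realType)
  (P : probability T R) (X Y : T -> R) (Xs Ys : nat -> T -> R) :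
  unit_frechet P X -> unit_frechet P Y ->
  (fun u : R => fine (P ([set t | u < X t] `&` [set t | u < Y t])) /
                fine (P [set t | u < Y t])) @ +oo --> (0 : R) ->
  (forall i, measurable_fun setT (Xs i)) ->
  (forall i, measurable_fun setT (Ys i)) ->
  mutually_independent P (fun i t => (Xs i t, Ys i t)) ->
  identically_distributed P (fun i t => (Xs i t, Ys i t)) (fun t => (X t, Y t)) ->
  {ae P, forall t, qcorr Xs Ys n t @[n --> \oo] --> (0 : R)} /\
  (forall u : R, 0 < u ->
     {ae P, forall t, tail_qcorr u Xs Ys n t @[n --> \oo] --> (0 : R)}).
Proof.
move=> fX fY XY_indep mXs mYs indep idd.
have YX_indep := tail_independentC fX fY XY_indep.
have mswap : measurable_fun [set: R * R] (fun p : R * R => (p.2, p.1)).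
  exact: measurable_swap.
have indep_swap := mutually_independent_comp mswap indep.
have idd_swap := identically_distributed_comp mswap idd.
split => [|u u_gt0].
- apply: filterS2 (ae_bigmax_ratio_cvgy fX fY XY_indep mXs mYs indep idd)
    (ae_bigmax_ratio_cvgy fY fX YX_indep mYs mXs indep_swap idd_swap) => t.
  exact: quot_corr_cvg0.
- apply: filterS2
    (ae_bigmax_tail_ratio_cvgy fY fX YX_indep mYs mXs indep_swap idd_swap u_gt0)
    (ae_bigmax_tail_ratio_cvgy fX fY XY_indep mXs mYs indep idd u_gt0) => t.
  exact: quot_corr_cvg0.
Qed.
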